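(* Let $d\ge 2$ and let $\Lambda=\{\lambda_S:\emptyset\ne S\subseteq\mathbb{I}_d\}$ with all $\lambda_S>0$. If the survival copula of a random vector $\boldsymbol Z\in\mathbb{R}^d$ is the generalized Marshall–Olkin survival copula $\widehat C^{\mathrm{MO}(\Lambda)}$, then $\boldsymbol Z$ is mutually asymptotically independent.
   Context: Write $\mathbb{I}_d=\{1,\dots,d\}$. The generalized Marshall–Olkin survival copula with rate parameter $\Lambda$ is $\widehat C^{\mathrm{MO}(\Lambda)}(u_1,\dots,u_d)=\prod_{i=1}^d\prod_{S\subseteq\mathbb{I}_d,\,|S|=i}\ \min_{j\in S}u_j^{\eta_j^S}$ for $u_j\in[0,1]$, where $\eta_j^S=\lambda_S/\sum_{J\subseteq\mathbb{I}_d,\,J\ni j}\lambda_J$ for $j\in S$. For a survival copula $\widehat C$ and nonempty $S\subseteq\mathbb{I}_d$, $\widehat C_S$ denotes $\widehat C$ with the arguments outside $S$ set to $1$ (so $\widehat C_S(u)=u$ if $|S|=1$). A random vector with survival copula $\widehat C$ is mutually asymptotically independent if for every $S\subseteq\mathbb{I}_d$ with $|S|\ge2$ and every $\ell\in S$, $\lim_{u\downarrow0}\widehat C_S(u,\dots,u)/\widehat C_{S\setminus\{\ell\}}(u,\dots,u)=0$, with $0/0:=0$. *)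

From mathcomp Require Import all_boot all_order all_algebra.
From mathcomp Require Import all_classical all_reals all_analysis.
Set Implicit Arguments. Unset Strict Implicit. Unset Printing Implicit Defensive.
Import Order.TTheory GRing.Theory Num.Theory.
Import numFieldNormedType.Exports.
Local Open Scope ring_scope.
Local Open Scope classical_set_scope.

Definition MO_eta (R : realType) (d : nat) (lam : {set 'I_d} -> R)
  (j : 'I_d) (S : {set 'I_d}) : R :=
  lam S / \sum_(J : {set 'I_d} | j \in J) lam J.

Definition MO_survival_copula (R : realType) (d : nat) (lam : {set 'I_d} -> R)
  (u : 'I_d -> R) : R :=
  \prod_(1 <= i < d.+1)
    \prod_(S : {set 'I_d} | #|S| == i)
      \big[Order.min/1]_(j in S) (u j `^ MO_eta lam j S).

(* C_S(t,...,t): arguments outside S set to 1, arguments in S set to t *)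
Definition copula_margin_diag (R : realType) (d : nat)
  (C : ('I_d -> R) -> R) (S : {set 'I_d}) (t : R) : R :=
  C (fun j => if j \in S then t else 1).

(* Mutual asymptotic independence, expressed via the survival copula.
   (Division by 0 is 0 in MathComp, matching the convention 0/0 := 0.) *)
Definition mutually_asymptotically_independent (R : realType) (d : nat)
  (C : ('I_d -> R) -> R) : Prop :=
  forall (S : {set 'I_d}), (2 <= #|S|)%N -> forall l : 'I_d, l \in S ->
    (fun t : R => copula_margin_diag C S t / copula_margin_diag C (S :\ l) t)
      @ 0^'+ --> (0 : R).

From mathcomp Require Import all_boot all_order all_algebra.
From mathcomp Require Import all_classical all_reals all_analysis.
Import Order.TTheory GRing.Theory Num.Theory.
Import numFieldNormedType.Exports.
Set Implicit Arguments.
Unset Strict Implicit.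
Local Open Scope ring_scope.

(* For t in (0, 1], lowering the argument of the copula from the diagonal
   point of S \ {l} to that of S can only decrease each factor
   min_{j in T} u_j^{eta_j^T}, and it turns the factor of T = {l} from 1
   into t^{eta_l^{l}}.  Hence C_S(t) <= t^{eta_l^{l}} C_{S \ {l}}(t), and
   the ratio tends to 0 because eta_l^{l} > 0. *)

Section MarshallOlkin.
Variables (R : realType) (d : nat) (lam : {set 'I_d} -> R).
Hypothesis lam_gt0 : forall S : {set 'I_d}, (0 < #|S|)%N -> 0 < lam S.
Implicit Types (u v : 'I_d -> R) (S : {set 'I_d}) (j l : 'I_d).

Lemma MO_eta_gt0 j S : j \in S -> 0 < MO_eta lam j S.
Proof.
have lam_gt0_mem (J : {set 'I_d}) : j \in J -> 0 < lam J.
  by move=> jJ; apply: lam_gt0; apply/card_gt0P; exists j.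
move=> jS; rewrite /MO_eta divr_gt0 ?lam_gt0_mem //.
rewrite (bigD1 [set j]) ?set11 //= ltr_pwDl ?lam_gt0_mem ?set11 //.
by apply: sumr_ge0 => J /andP[/lam_gt0_mem/ltW].
Qed.

Definition MO_factor u S : R :=
  \big[Order.min/1]_(j in S) u j `^ MO_eta lam j S.

Lemma MO_survival_copulaE u :
  MO_survival_copula lam u = \prod_(S : {set 'I_d}) MO_factor u S.
Proof.
have card_ltd S : (#|S| < d.+1)%N.
  by rewrite ltnS -[X in (_ <= X)%N]card_ord max_card.
transitivity
  (\prod_(0 <= i < d.+1) \prod_(S : {set 'I_d} | #|S| == i) MO_factor u S).
  rewrite big_ltn // (big_pred1 finset.set0) => [|S]; last exact: cards_eq0.
  by rewrite /MO_factor big_set0 mul1r.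
by rewrite big_mkord (partition_big (fun S => Ordinal (card_ltd S)) xpredT).
Qed.

Lemma MO_factor_ge0 u S : 0 <= MO_factor u S.
Proof.
apply: (big_ind (fun x : R => 0 <= x)) => // [x y|j _]; last exact: powR_ge0.
by rewrite le_min => -> ->.
Qed.

Lemma MO_factor_gt0 u S : (forall j, 0 < u j) -> 0 < MO_factor u S.
Proof.
move=> u_gt0; apply: (big_ind (fun x : R => 0 < x)) => // [x y|j _].
  by rewrite lt_min => -> ->.
exact: powR_gt0.
Qed.

Lemma MO_factor_le u v S :
  (forall j, 0 <= u j <= v j) -> MO_factor u S <= MO_factor v S.
Proof.
move=> uv; apply: (big_ind2 (fun x y : R => x <= y)) => //.
  by move=> x1 x2 y1 y2; apply: le_min2.
move=> j jS; have /andP[u_ge0 uv_j] := uv j.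
apply: ge0_ler_powR; rewrite ?nnegrE //; first exact/ltW/MO_eta_gt0.
exact: le_trans uv_j.
Qed.

Lemma MO_factor_set1_le u l :
  MO_factor u [set l] <= u l `^ MO_eta lam l [set l].
Proof. by rewrite /MO_factor big_set1E ge_min lexx. Qed.

Lemma MO_factor_set1_id v l : v l = 1 -> MO_factor v [set l] = 1.
Proof. by move=> vl; rewrite /MO_factor big_set1E vl powR1 minxx. Qed.

Lemma MO_survival_copula_gt0 u :
  (forall j, 0 < u j) -> 0 < MO_survival_copula lam u.
Proof.
by move=> u_gt0; rewrite MO_survival_copulaE prodr_gt0 // => S _; apply: MO_factor_gt0.
Qed.

Lemma MO_survival_copula_le_pow u v l :
  (forall j, 0 <= u j <= v j) -> v l = 1 ->
  MO_survival_copula lam u <=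
    u l `^ MO_eta lam l [set l] * MO_survival_copula lam v.
Proof.
move=> uv vl; rewrite !MO_survival_copulaE (bigD1 [set l]) //=.
rewrite [X in _ <= _ * X](bigD1 [set l]) //= (MO_factor_set1_id vl) mul1r.
rewrite ler_pM ?MO_factor_ge0 ?MO_factor_set1_le //.
  by rewrite prodr_ge0 // => S _; apply: MO_factor_ge0.
by apply: ler_prod => S _; rewrite MO_factor_ge0 MO_factor_le.
Qed.

End MarshallOlkin.

Lemma diag_point_le (R : realType) (d : nat) (A B : {set 'I_d}) (t : R) :
  A \subset B -> 0 <= t <= 1 -> forall j : 'I_d,
  0 <= (if j \in B then t else 1) <= (if j \in A then t else 1).
Proof.
move=> AB /andP[t_ge0 t_le1] j.
case: ifP => jB; case: ifP => jA; rewrite ?lexx ?ler01 ?t_ge0 ?t_le1 //.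
by rewrite (fintype.subsetP AB _ jA) in jB.
Qed.

Theorem mainTheorem3 (R : realType) (d : nat) (lam : {set 'I_d} -> R) :
  (2 <= d)%N ->
  (forall S : {set 'I_d}, (0 < #|S|)%N -> 0 < lam S) ->
  mutually_asymptotically_independent (MO_survival_copula lam).
Proof.
move=> _ lam_gt0 S _ l lS.
set c := MO_eta lam l [set l].
have c_gt0 : 0 < c by apply: MO_eta_gt0; rewrite ?set11.
apply: (@squeeze_cvgr _ _ _ _ (fun=> 0) (fun t => t `^ c)); last 2 first.
- exact: cvg_cst.
- exact: powR_cvg0.
near=> t.
have t_gt0 : 0 < t by near: t; exact: nbhs_right_gt.
have t_le1 : t <= 1 by near: t; exact: nbhs_right_le.
have [marginS_gt0 marginD_gt0] :
    0 < copula_margin_diag (MO_survival_copula lam) S t /\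
    0 < copula_margin_diag (MO_survival_copula lam) (S :\ l) t.
  by split; apply: MO_survival_copula_gt0 => j; case: ifP.
rewrite divr_ge0 ?(ltW marginS_gt0) ?(ltW marginD_gt0) //= ler_pdivrMr //.
have := MO_survival_copula_le_pow lam_gt0 (l := l)
  (u := fun j => if j \in S then t else 1) (v := fun j => if j \in S :\ l then t else 1).
rewrite lS setD11; apply=> //.
by apply: diag_point_le; rewrite ?subsetDl ?ltW ?t_gt0.
Unshelve. all: end_near.
Qed.
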